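(* Let $\mathcal{P}=\{P_1,\ldots,P_n\}$ and let $\mathcal{F}\subseteq 2^{\mathcal{P}}$ be a fail-prone system. Consider the ideal $I=\langle \xi_{\mathcal{F}_{\bar X}},\ \xi_{\mathcal{F}_{\bar Y}},\ \xi_{\mathcal{F}_{\bar T}},\ \omega\rangle\subseteq\mathbb{B}(\bar X,\bar Y,\bar T)$ and let $\mathcal{G}$ be a Gröbner basis for $I$. If $|SM(\mathcal{G})|=|\varphi(\mathcal{F})|^3$, then $\mathcal{F}$ satisfies the $Q^3$-condition, i.e. $\mathcal{P}\not\subseteq F_1\cup F_2\cup F_3$ for all $F_1,F_2,F_3\in\mathcal{F}$.
   Context: $\mathbb{B}=\mathbb{F}_2$; $\mathbb{B}(\bar X,\bar Y,\bar T)$ is the Boolean polynomial ring $\mathbb{B}[X_1,\ldots,X_n,Y_1,\ldots,Y_n,T_1,\ldots,T_n]$ modulo $\langle X_i^2-X_i,Y_i^2-Y_i,T_i^2-T_i\rangle$. $\varphi:2^{\mathcal{P}}\to\mathbb{B}^n$ sends a set to its indicator vector, $\varphi(\mathcal{F})=\{\varphi(F):F\in\mathcal{F}\}$. For $S\subseteq\mathcal{P}$, $\xi_S(\bar Z)=\prod_{i=1}^n(1+Z_i+\varphi(S)_i)$; for $\mathcal{A}\subseteq 2^{\mathcal{P}}$, $\xi_{\mathcal{A}_{\bar Z}}=\prod_{A\in\mathcal{A}}(\xi_A(\bar Z)+1)$. $\omega(\bar X,\bar Y,\bar T)=\prod_{i=1}^n(X_iY_iT_i+X_iY_i+X_iT_i+Y_iT_i+X_i+Y_i+T_i)$.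 A fail-prone system is a collection of subsets of $\mathcal{P}$ none of which is contained in another. Monomial order: lexicographic with block order $\bar T<\bar Y<\bar X$ and within blocks $X_n\prec\cdots\prec X_1$ etc. A Gröbner basis of $I$ is a generating set $\mathcal{G}$ such that every nonzero $f\in I$ has leading monomial divisible by that of some $g\in\mathcal{G}$; $SM(\mathcal{G})$ is the set of multilinear monomials not in the ideal generated by the leading monomials of elements of $I$. *)

(* Boolean polynomial ring B(X,Y,T) = F_2[X,Y,T]/<Z^2-Z>,
   represented by its canonical multilinear representatives:
   a multilinear monomial is a set of variables, a Boolean polynomial is the
   set of monomials occurring with coefficient 1. *)
From mathcomp Require Import all_boot.
Set Implicit Arguments. Unset Strict Implicit. Unset Printing Implicit Defensive.

Section Boolean.
Variable n : nat.

(* Variables: (0,i) = X_{i+1}, (1,i) = Y_{i+1}, (2,i) = T_{i+1}. *)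
Definition var := ('I_3 * 'I_n)%type.
Definition Xv (i : 'I_n) : var := (inord 0, i).
Definition Yv (i : 'I_n) : var := (inord 1, i).
Definition Tv (i : 'I_n) : var := (inord 2, i).

Definition bmon := {set var}.
Definition bpoly := {set bmon}.

Definition bzero : bpoly := set0.
Definition bone : bpoly := [set set0].
Definition bconst (b : bool) : bpoly := if b then bone else bzero.
Definition bvar (v : var) : bpoly := [set [set v]].
Definition badd (p q : bpoly) : bpoly := (p :\: q) :|: (q :\: p).
(* product: monomials multiply by union (since Z^2 = Z), coefficients mod 2 *)
Definition bmul (p q : bpoly) : bpoly :=
  [set c | odd #|[set ab in setX p q | ab.1 :|: ab.2 == c]|].
Definition bprod (s : seq bpoly) : bpoly := foldr bmul bone s.

(* sum over s in S of h s * s *)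
Definition bcomb (S : pred bpoly) (h : {ffun bpoly -> bpoly}) : bpoly :=
  [set c | odd #|[set s : bpoly | S s & c \in bmul (h s) s]|].

Definition in_ideal (S : pred bpoly) (f : bpoly) : bool :=
  [exists h : {ffun bpoly -> bpoly}, f == bcomb S h].

(* monomial order: lex, block order T < Y < X, X_n < ... < X_1 etc. *)
Definition rk (v : var) : nat := (2 - v.1) * n + (n - 1 - v.2).
Definition lexlt (a b : bmon) : bool :=
  [exists v, [&& v \in b, v \notin a &
     [forall w, (rk v < rk w) ==> ((w \in a) == (w \in b))]]].
Definition is_lead (f : bpoly) (a : bmon) : bool :=
  (a \in f) && [forall b in f, (b == a) || lexlt b a].
Definition bdivides (a b : bmon) : bool := a \subset b.

Definition groebner_basis (inI : pred bpoly) (G : seq bpoly) : Prop :=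
  (forall f, in_ideal (mem G) f = inI f) /\
  (forall f, inI f -> f != bzero ->
     exists2 g, g \in G &
       exists a b, [/\ is_lead g a, is_lead f b & bdivides a b]).

(* SM(G): multilinear monomials not in the ideal generated by the leading
   monomials of elements of the ideal I (with membership inI). *)
Definition SM (inI : pred bpoly) : {set bmon} :=
  [set a : bmon | ~~ in_ideal
     [pred p : bpoly | [exists f, inI f && [exists b, is_lead f b && (p == [set b])]]]
     [set a]].

Definition phi (S : {set 'I_n}) : {ffun 'I_n -> bool} := [ffun i => i \in S].

Definition xi (Z : 'I_n -> var) (S : {set 'I_n}) : bpoly :=
  bprod [seq badd (badd bone (bvar (Z i))) (bconst (phi S i)) | i <- enum 'I_n].
Definition xiF (Z : 'I_n -> var) (F : {set {set 'I_n}}) : bpoly :=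
  bprod [seq badd (xi Z A) bone | A <- enum F].

Definition omega : bpoly :=
  bprod [seq
    let x := bvar (Xv i) in let y := bvar (Yv i) in let t := bvar (Tv i) in
    badd (badd (badd (badd (badd (badd (bmul (bmul x y) t) (bmul x y))
      (bmul x t)) (bmul y t)) x) y) t
  | i <- enum 'I_n].

Definition idealI (F : {set {set 'I_n}}) : pred bpoly :=
  in_ideal (mem [:: xiF Xv F; xiF Yv F; xiF Tv F; omega]).

Definition fail_prone (F : {set {set 'I_n}}) : Prop :=
  forall A B, A \in F -> B \in F -> A \subset B -> A = B.

Definition Q3 (F : {set {set 'I_n}}) : Prop :=
  forall F1 F2 F3, F1 \in F -> F2 \in F -> F3 \in F ->
    ~~ ([set: 'I_n] \subset F1 :|: F2 :|: F3).

End Boolean.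

From mathcomp Require Import all_boot zify.
Set Implicit Arguments. Unset Strict Implicit. Unset Printing Implicit Defensive.

(* A Boolean polynomial is determined by the function it induces on the
   points of B^{3n}, and every polynomial vanishing on the common zero set
   V(I) of the generators of I lies in I.  Hence distinct sets of standard
   monomials induce distinct functions on V(I): otherwise their sum would be
   a nonzero element of I whose leading monomial is standard.  This gives
   2^|SM| <= 2^|V(I)|.  A point of V(I) is determined by its three blocks of
   coordinates, which are members of F whose union misses some party, so a
   triple F1, F2, F3 covering P forces |V(I)| < |F|^3 = |phi(F)|^3. *)

Lemma odd_sum_odd (I : finType) (P : pred I) (F : I -> nat) :
  odd (\sum_(i | P i) F i) = odd (\sum_(i | P i) odd (F i)).
Proof.
apply: (big_rec2 (fun a b => odd a = odd b)) => // i a b _ IH.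
by rewrite !oddD IH oddb.
Qed.

Lemma odd_card_odd_sum (I : finType) (P : pred I) (F : I -> nat) :
  odd #|[set i | P i & odd (F i)]| = odd (\sum_(i | P i) F i).
Proof.
rewrite odd_sum_odd -sum1dep_card big_mkcondr /=.
by congr odd; apply: eq_bigr => i _; case: (odd (F i)).
Qed.

Lemma odd_card_symdiff (T : finType) (A B : {set T}) :
  odd #|(A :\: B) :|: (B :\: A)| = odd #|A| (+) odd #|B|.
Proof.
have disjAB : (A :\: B) :&: (B :\: A) = set0.
  by apply/setP => x; rewrite !inE; case: (x \in A); case: (x \in B).
have := cardsUI (A :\: B) (B :\: A); rewrite disjAB cards0 addn0 => ->.
rewrite -(cardsID B A) -(cardsID A B) setIC !oddD.
by case: (odd #|A :\: B|); case: (odd #|B :\: A|); case: (odd #|B :&: A|).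
Qed.

Section SeqMax.
Variables (T : eqType) (lt : rel T).
Hypotheses (lt_trans : transitive lt) (lt_total : forall a b, a != b -> lt a b || lt b a).

Lemma seq_max (s : seq T) : s != [::] ->
  exists2 b, b \in s & forall c, c \in s -> (c == b) || lt c b.
Proof.
elim: s => [//|a [|a' s] IH] _.
  by exists a; rewrite ?inE // => c; rewrite inE => ->.
have [b bs maxb] := IH isT.
have [-> | ab] := eqVneq a b.
  by exists b; rewrite ?inE ?eqxx // => c; rewrite inE => /orP [-> | /maxb].
have /orP [lt_ab | lt_ba] := lt_total ab.
  exists b; first by rewrite inE bs orbT.
  by move=> c; rewrite inE => /orP [/eqP -> | /maxb]; rewrite ?lt_ab ?orbT.
exists a; first by rewrite inE eqxx.
move=> c; rewrite inE => /orP [-> // | /maxb /orP [/eqP -> | lt_cb]].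
  by rewrite lt_ba orbT.
by rewrite (lt_trans lt_cb lt_ba) orbT.
Qed.

End SeqMax.

Section BooleanPolynomials.
Variable n : nat.
Implicit Types (p q s : bpoly n) (m : bmon n) (x : {set var n}) (S : pred (bpoly n)).

(* A point of B^{3n} is encoded by the set x of variables equal to 1 there;
   a multilinear monomial m then takes the value 1 exactly when m \subset x. *)
Definition beval p x : bool := odd #|[set m in p | m \subset x]|.

Lemma beval_add p q x : beval (badd p q) x = beval p x (+) beval q x.
Proof.
rewrite /beval -odd_card_symdiff; congr odd; apply: eq_card => m; rewrite !inE.
by case: (m \in p); case: (m \in q); case: (m \subset x).
Qed.

Lemma beval_mul p q x : beval (bmul p q) x = beval p x && beval q x.
Proof.
pose U (ab : bmon n * bmon n) := ab.1 :|: ab.2.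
pose N c := #|[set ab in setX p q | U ab == c]|.
rewrite /beval.
have -> : [set c in bmul p q | c \subset x] = [set c : bmon n | c \subset x & odd (N c)].
  by apply/setP => c; rewrite !inE andbC.
rewrite odd_card_odd_sum.
have -> : \sum_(c : bmon n | c \subset x) N c = #|[set ab in setX p q | U ab \subset x]|.
  rewrite -sum1dep_card (partition_big U (fun c : bmon n => c \subset x)) => [|ab /andP []//].
  apply: eq_bigr => c cx; rewrite sum1dep_card /N; apply: eq_card => ab; rewrite !inE.
  have [-> | _] := eqVneq (U ab) c; last by rewrite !andbF.
  by rewrite cx !andbT.
have -> : [set ab in setX p q | U ab \subset x] =
          setX [set a in p | a \subset x] [set b in q | b \subset x].
  by apply/setP => [[a b]]; rewrite !inE /U /= subUset andbACA.
by rewrite cardsX oddM.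
Qed.

Lemma beval_zero x : beval (bzero n) x = false.
Proof.
rewrite /beval (_ : [set m in bzero n | _] = set0) ?cards0 //.
by apply/setP => m; rewrite !inE.
Qed.

Lemma beval_one x : beval (bone n) x = true.
Proof.
rewrite /beval (_ : [set m in bone n | m \subset x] = [set set0]) ?cards1 //.
by apply/setP => m; rewrite !inE; have [-> | //] := eqVneq m set0; rewrite sub0set.
Qed.

Lemma beval_const b x : beval (bconst n b) x = b.
Proof. by case: b; rewrite /bconst ?beval_one ?beval_zero. Qed.

Lemma beval_var v x : beval (bvar v) x = (v \in x).
Proof.
rewrite /beval (_ : [set m in bvar v | m \subset x] = if v \in x then [set [set v]] else set0).
  by case: (v \in x); rewrite ?cards1 ?cards0.
apply/setP => m; rewrite !inE; have [-> | ne] := eqVneq m [set v].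
  by rewrite sub1set; case: (v \in x); rewrite ?inE ?eqxx.
by case: (v \in x); rewrite ?inE ?(negbTE ne).
Qed.

Lemma beval_prod (r : seq (bpoly n)) x : beval (bprod r) x = all (beval^~ x) r.
Proof. by elim: r => [|p r IH] /=; rewrite ?beval_one // beval_mul IH. Qed.

Lemma beval_bcomb S h x :
  beval (bcomb S h) x = odd (\sum_(s | S s) (beval (h s) x && beval s x)).
Proof.
pose M m := #|[set s | S s & m \in bmul (h s) s]|.
rewrite {1}/beval.
have -> : [set m in bcomb S h | m \subset x] = [set m : bmon n | m \subset x & odd (M m)].
  by apply/setP => m; rewrite !inE andbC.
rewrite odd_card_odd_sum.
transitivity (odd (\sum_(s | S s) #|[set m in bmul (h s) s | m \subset x]|)); last first.
  by rewrite odd_sum_odd; congr odd; apply: eq_bigr => s _; rewrite -beval_mul.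
congr odd; under eq_bigr => m _ do rewrite /M -sum1dep_card big_mkcondr /=.
rewrite exchange_big; apply: eq_bigr => s _.
by rewrite -big_mkcondr sum1dep_card; apply: eq_card => m; rewrite !inE andbC.
Qed.

Lemma badd_eq0 p q : badd p q = bzero n -> p = q.
Proof.
move=> /setP pq0; apply/setP => m; have := pq0 m; rewrite !inE.
by case: (m \in p); case: (m \in q).
Qed.

(* Evaluate at a monomial of minimal degree of p: it is the only monomial of p
   below itself. *)
Lemma beval_eq0 p : (forall x, ~~ beval p x) -> p = bzero n.
Proof.
move=> p0; apply/eqP/negPn/negP => /set0Pn [m0 m0p].
have [m mp minm] := arg_minnP (fun m : bmon n => #|m|) m0p.
have below_m : [set m' in p | m' \subset m] = [set m].
  apply/setP => m'; rewrite !inE; have [-> | ne] := eqVneq m' m.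
    by rewrite subxx andbT; exact: mp.
  apply/negP => /andP [m'p sub]; move/negP: ne; apply.
  by rewrite eqEcard sub minm.
by have := p0 m; rewrite /beval below_m cards1.
Qed.

Lemma beval_inj p q : (forall x, beval p x = beval q x) -> p = q.
Proof.
by move=> eqpq; apply: badd_eq0; apply: beval_eq0 => x; rewrite beval_add eqpq addbb.
Qed.

Lemma beval_onto (f : {set var n} -> bool) : exists p, forall x, beval p x = f x.
Proof.
pose E p := [ffun x => beval p x].
have E_inj : injective E.
  by move=> p q /ffunP eqE; apply: beval_inj => x; have := eqE x; rewrite !ffunE.
pose support (g : {ffun {set var n} -> bool}) : bpoly n := [set m | g m].
have support_inj : injective support.
  by move=> g g' /setP eqg; apply/ffunP => m; have := eqg m; rewrite !inE.
have /codomP [p Ep] := inj_card_onto E_inj (leq_card _ support_inj) [ffun x => f x].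
by exists p => x; move/ffunP: Ep => /(_ x); rewrite !ffunE.
Qed.

Definition binterp (f : {set var n} -> bool) : bpoly n :=
  odflt (bzero n) [pick p | [forall x, beval p x == f x]].

Lemma beval_binterp f x : beval (binterp f) x = f x.
Proof.
rewrite /binterp; case: pickP => [p /forallP /(_ x) /eqP // | none].
have [p fp] := beval_onto f.
by have := none p; rewrite (_ : [forall x, _] = true) //; apply/forallP => y; rewrite fp.
Qed.

Definition variety S : {set {set var n}} := [set x | [forall s, S s ==> ~~ beval s x]].

Lemma in_ideal_gen S g : S g -> in_ideal S g.
Proof.
move=> Sg; apply/existsP; exists [ffun s => bconst n (s == g)].
apply/eqP/beval_inj => x; rewrite beval_bcomb (bigD1 g) //= ffunE eqxx beval_const.
rewrite big1 ?addn0 ?oddb // => s /andP [_ /negbTE ne].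
by rewrite ffunE beval_const ne.
Qed.

(* Nullstellensatz: at a point where p = 1, charge p to one generator not
   vanishing there. *)
Lemma in_ideal_vanishing S p : {in variety S, forall x, ~~ beval p x} -> in_ideal S p.
Proof.
move=> p0; pose gen x := [pick g | S g && beval g x].
apply/existsP; exists [ffun s => binterp (fun x => beval p x && (gen x == Some s))].
apply/eqP/beval_inj => x; rewrite beval_bcomb.
under eq_bigr => s _ do rewrite ffunE beval_binterp.
rewrite /gen; case: pickP => [g /andP [Sg gx] | none].
  rewrite (bigD1 g Sg) /= eqxx gx !andbT big1 ?addn0 ?oddb // => s /andP [_ ne].
  by rewrite (inj_eq Some_inj) eq_sym (negbTE ne) andbF.
rewrite big1 /= => [|s _]; last by rewrite andbF.
apply/negbTE/p0; rewrite inE; apply/forallP => s; apply/implyP => Ss.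
by have := none s; rewrite Ss => /negbT.
Qed.

End BooleanPolynomials.

Section MonomialOrder.
Variable n : nat.
Implicit Types (a b c : bmon n) (p : bpoly n).

Lemma rk_inj : injective (@rk n).
Proof.
move=> [k i] [k' i']; rewrite /rk /= => eq_rk.
have [eq_k eq_i] : (k : nat) = k' /\ (i : nat) = i'.
  move: eq_rk (ltn_ord k) (ltn_ord k') (ltn_ord i) (ltn_ord i').
  by case: (k : nat) => [|[|[|?]]]; case: (k' : nat) => [|[|[|?]]] /=; lia.
by congr pair; apply: val_inj.
Qed.

Lemma lexlt_total a b : a != b -> lexlt a b || lexlt b a.
Proof.
move=> ab; pose D := (a :\: b) :|: (b :\: a).
have inD v : (v \in D) = ((v \in a) != (v \in b)).
  by rewrite !inE; case: (v \in a); case: (v \in b).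
have [v0 v0D] : exists v, v \in D.
  apply/existsP; apply: contraR ab => /existsPn noD; apply/eqP/setP => v.
  by have := noD v; rewrite inD negbK => /eqP.
have [v vD maxv] := arg_maxnP (@rk n) v0D.
have above_v w : rk v < rk w -> (w \in a) == (w \in b).
  by move=> lt_vw; rewrite -[_ == _]negbK -inD; apply: contraL lt_vw => /maxv; rewrite -leqNgt.
have : v \in D := vD.
rewrite inD; case va: (v \in a); case vb: (v \in b) => // _.
  apply/orP; right; apply/existsP; exists v; rewrite va vb /=.
  by apply/forallP => w; apply/implyP => /above_v; rewrite eq_sym.
apply/orP; left; apply/existsP; exists v; rewrite va vb /=.
by apply/forallP => w; apply/implyP => /above_v.
Qed.

Lemma lexlt_trans : transitive (@lexlt n).
Proof.
move=> b a c /existsP [v /and3P [vb va /forallP above_v]].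
move=> /existsP [u /and3P [uc ub /forallP above_u]].
have ab w : rk v < rk w -> (w \in a) = (w \in b) by move/(implyP (above_v w))/eqP.
have bc w : rk u < rk w -> (w \in b) = (w \in c) by move/(implyP (above_u w))/eqP.
apply/existsP; case: (ltngtP (rk v) (rk u)) => [lt_vu | lt_uv | /rk_inj eq_vu].
- exists u; rewrite uc ab // ub /=; apply/forallP => w; apply/implyP => lt_uw.
  by rewrite ab ?bc //; apply: ltn_trans lt_uw.
- exists v; rewrite -bc // vb va /=; apply/forallP => w; apply/implyP => lt_vw.
  by rewrite ab ?bc //; apply: ltn_trans lt_vw.
- by move: ub; rewrite -eq_vu vb.
Qed.

Lemma exists_lead p : p != bzero n -> exists b, is_lead p b.
Proof.
move=> /set0Pn [m mp].
have /(seq_max lexlt_trans lexlt_total) [b] : enum p != [::].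
  by apply: contraTneq mp => ep; rewrite -mem_enum ep.
rewrite mem_enum => bp maxb; exists b; rewrite /is_lead bp /=.
by apply/forallP => c; apply/implyP => cp; apply: maxb; rewrite mem_enum.
Qed.

End MonomialOrder.

Section StandardMonomials.
Variable n : nat.

Lemma lead_notin_SM (inI : pred (bpoly n)) f b : inI f -> is_lead f b -> b \notin SM inI.
Proof.
move=> If lead_b; rewrite inE negbK; apply: in_ideal_gen.
by apply/existsP; exists f; rewrite If; apply/existsP; exists b; rewrite lead_b eqxx.
Qed.

Lemma card_SM_le_variety (S : pred (bpoly n)) : #|SM (in_ideal S)| <= #|variety S|.
Proof.
pose restr (T : bpoly n) := [set x in variety S | beval T x].
suff restr_inj : {in powerset (SM (in_ideal S)) &, injective restr}.
  rewrite -(@leq_exp2l 2) // -!card_powerset -(card_in_imset restr_inj).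
  apply: subset_leq_card; apply/subsetP => _ /imsetP [T _ ->].
  by rewrite inE; apply/subsetP => x; rewrite inE => /andP [].
move=> T1 T2; rewrite !inE => /subsetP sub1 /subsetP sub2 /setP eq_restr.
apply: badd_eq0; apply/eqP; apply: contraT => /exists_lead [b lead_b].
have in_I : in_ideal S (badd T1 T2).
  apply: in_ideal_vanishing => x xV; rewrite beval_add.
  by move: xV (eq_restr x); rewrite !inE => -> /= ->; rewrite addbb.
have : b \in badd T1 T2 by case/andP: lead_b.
rewrite !inE => /orP [/andP [_ /sub1] | /andP [_ /sub2]];
  by rewrite (negbTE (lead_notin_SM in_I lead_b)).
Qed.

End StandardMonomials.

Section QuorumIdeal.
Variable n : nat.
Implicit Types (x : {set var n}) (F : {set {set 'I_n}}).

Definition block (Z : 'I_n -> var n) x : {set 'I_n} := [set i | Z i \in x].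

Definition blocks x := (block (@Xv n) x, block (@Yv n) x, block (@Tv n) x).

Definition idealI_gens F := [:: xiF (@Xv n) F; xiF (@Yv n) F; xiF (@Tv n) F; omega n].

Lemma beval_xi Z A x : beval (xi Z A) x = (block Z x == A).
Proof.
rewrite /xi beval_prod all_map; apply/allP/eqP => [xiZ | <- i _ /=].
  apply/setP => i; have := xiZ i (mem_enum _ i).
  rewrite /= !beval_add beval_one beval_var beval_const ffunE !inE.
  by case: (Z i \in x); case: (i \in A).
by rewrite !beval_add beval_one beval_var beval_const ffunE !inE; case: (Z i \in x).
Qed.

Lemma beval_xiF Z F x : beval (xiF Z F) x = (block Z x \notin F).
Proof.
rewrite /xiF beval_prod all_map; apply/allP/idP => [xiFZ | xF A].
  apply/negP => xF; have := xiFZ (block Z x); rewrite mem_enum xF /=.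
  by rewrite beval_add beval_xi eqxx beval_one => /(_ isT).
rewrite mem_enum /= beval_add beval_xi beval_one addbT => AF.
by apply: contra xF => /eqP ->.
Qed.

Lemma beval_omega x :
  beval (omega n) x =
  ([set: 'I_n] \subset block (@Xv n) x :|: block (@Yv n) x :|: block (@Tv n) x).
Proof.
rewrite /omega beval_prod all_map; apply/allP/subsetP => [om i _ | cover i _] /=.
  have := om i (mem_enum _ i); rewrite /= !beval_add !beval_mul !beval_var !inE.
  by case: (Xv i \in x); case: (Yv i \in x); case: (Tv i \in x).
have := cover i (in_setT i); rewrite !beval_add !beval_mul !beval_var !inE.
by case: (Xv i \in x); case: (Yv i \in x); case: (Tv i \in x).
Qed.

Lemma var_cases (v : var n) : [\/ v = Xv v.2, v = Yv v.2 | v = Tv v.2].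
Proof.
case: v => [[[|[|[|k]]] lt_k3] i] //=; [apply: Or31 | apply: Or32 | apply: Or33];
  by congr pair; apply: val_inj; rewrite /= inordK.
Qed.

Lemma blocks_inj : injective blocks.
Proof.
move=> x y [eqX eqY eqT]; apply/setP => v.
by case: (var_cases v) => ->; [move/setP: eqX | move/setP: eqY | move/setP: eqT];
  move=> /(_ v.2); rewrite !inE.
Qed.

Lemma in_variety_idealI F x :
  (x \in variety (mem (idealI_gens F))) =
  [&& block (@Xv n) x \in F, block (@Yv n) x \in F, block (@Tv n) x \in F &
      ~~ ([set: 'I_n] \subset block (@Xv n) x :|: block (@Yv n) x :|: block (@Tv n) x)].
Proof.
rewrite inE; apply/forallP/and4P => [gens0 | [XF YF TF not_cover] s].
  have gen0 s : s \in idealI_gens F -> ~~ beval s x by apply/implyP/gens0.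
  split; [move: (gen0 (xiF (@Xv n) F)) | move: (gen0 (xiF (@Yv n) F)) |
          move: (gen0 (xiF (@Tv n) F)) | move: (gen0 (omega n))];
    by rewrite ?beval_xiF ?beval_omega ?negbK !inE eqxx ?orbT => /(_ isT).
apply/implyP; rewrite !inE => /or4P [] /eqP ->;
  by rewrite ?beval_xiF ?beval_omega ?negbK.
Qed.

Lemma card_variety_idealI F (F1 F2 F3 : {set 'I_n}) :
  F1 \in F -> F2 \in F -> F3 \in F -> [set: 'I_n] \subset F1 :|: F2 :|: F3 ->
  #|variety (mem (idealI_gens F))| < #|F| ^ 3.
Proof.
move=> F1F F2F F3F cover.
have sub : blocks @: variety (mem (idealI_gens F))
             \subset setX (setX F F) F :\ (F1, F2, F3).
  apply/subsetP => _ /imsetP [x + ->]; rewrite in_variety_idealI.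
  move=> /and4P [XF YF TF not_cover]; rewrite /blocks !inE /= XF YF TF !andbT.
  by apply: contra not_cover => /eqP [-> -> ->].
rewrite -(card_imset _ blocks_inj); apply: leq_ltn_trans (subset_leq_card sub) _.
rewrite (_ : #|F| ^ 3 = #|setX (setX F F) F|); last by rewrite !cardsX !expnS expn0 muln1 mulnA.
by apply/proper_card/properD1; rewrite !inE F1F F2F F3F.
Qed.

End QuorumIdeal.

Lemma phi_inj n : injective (@phi n).
Proof. by move=> A B /ffunP eqAB; apply/setP => i; have := eqAB i; rewrite !ffunE. Qed.

Theorem mainTheorem5 (n : nat) (F : {set {set 'I_n}}) (G : seq (bpoly n)) :
  fail_prone F ->
  groebner_basis (idealI F) G ->
  #|SM (idealI F)| = (#|(@phi n) @: F| ^ 3)%N ->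
  Q3 F.
Proof.
move=> _ _ card_SM F1 F2 F3 F1F F2F F3F; apply/negP => cover.
have := leq_ltn_trans (card_SM_le_variety _) (card_variety_idealI F1F F2F F3F cover).
by rewrite card_SM card_imset ?ltnn //; apply: phi_inj.
Qed.
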